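(* Let $r$ be a positive integer or $\infty$. Suppose $(A,B)$ is a partition of the vertex set of a graph $G$ such that the relation $\equiv_{(A,B)}$ has $k$ equivalence classes. If $G[A]$ and $G[B]$ each have a weak $r$-guidance system of maximum outdegree at most $c$, then $G$ has a weak $r$-guidance system of maximum outdegree at most $c+k$.
   Context: All graphs are finite, simple and undirected. For a partition $(A,B)$ of $V(G)$, $u\equiv_{(A,B)}v$ means that either $u,v\in A$ and $u,v$ have the same neighbors in $B$, or $u,v\in B$ and $u,v$ have the same neighbors in $A$. A partial orientation of $G$ is a directed graph $\vec{H}$ on $V(G)$ with every $(u,v)\in E(\vec{H})$ satisfying $uv\in E(G)$. $B_{\vec{H}}(v,a)$ is the set of vertices reachable from $v$ by a directed path of length at most $a$. For a positive integer $r$, a weak $r$-guidance system is a partial orientation $\vec{H}$ such that for any distinct $u,v$ at distance $\ell\le r$ in $G$ there exist non-negative integers $a,b$ with $a+b=\ell-1$ such that $G$ has an edge between $B_{\vec{H}}(u,a)$ and $B_{\vec{H}}(v,b)$; a weak $\infty$-guidance system is a partial orientation that is a weak $r$-guidance system for every positive integer $r$. *)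

From mathcomp Require Import all_boot.
Set Implicit Arguments. Unset Strict Implicit. Unset Printing Implicit Defensive.

Definition simple_graph (T : finType) (e : rel T) : Prop :=
  symmetric e /\ irreflexive e.

Definition walk_len (T : finType) (e : rel T) (u v : T) (n : nat) : Prop :=
  exists p : seq T, [/\ size p = n, path e u p & last u p = v].

Definition dist_eq (T : finType) (e : rel T) (u v : T) (l : nat) : Prop :=
  walk_len e u v l /\ forall m, m < l -> ~ walk_len e u v m.

Definition partial_orientation (T : finType) (e H : rel T) : Prop :=
  forall u v, H u v -> e u v.

Definition ball (T : finType) (H : rel T) (v : T) (a : nat) : T -> Prop :=
  fun x => exists n, n <= a /\ walk_len H v x n.

Definition edge_between (T : finType) (e : rel T) (X Y : T -> Prop) : Prop :=
  exists x y, [/\ X x, Y y & e x y].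

Definition weak_guidance (T : finType) (e H : rel T) (r : nat) : Prop :=
  partial_orientation e H /\
  forall u v l, u != v -> dist_eq e u v l -> l <= r ->
    exists a b, a + b = l.-1 /\ edge_between e (ball H u a) (ball H v b).

(* r is a positive integer (Some r) or infinity (None) *)
Definition weak_guidance_gen (T : finType) (e H : rel T) (r : option nat) : Prop :=
  match r with
  | Some n => weak_guidance e H n
  | None => forall n, 0 < n -> weak_guidance e H n
  end.

Definition pos_or_inf (r : option nat) : Prop :=
  match r with Some n => 0 < n | None => True end.

Definition max_outdeg_le (T : finType) (H : rel T) (c : nat) : Prop :=
  forall u, #|[set v | H u v]| <= c.

Definition induced (T : finType) (e : rel T) (S : {set T}) : rel {x : T | x \in S} :=
  fun x y => e (val x) (val y).

Definition equivAB (T : finType) (e : rel T) (A B : {set T}) (u v : T) : bool :=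
  (([&& u \in A, v \in A & [forall w in B, e u w == e v w]]) ||
   ([&& u \in B, v \in B & [forall w in A, e u w == e v w]])).

Definition equivAB_classes (T : finType) (e : rel T) (A B : {set T}) : {set {set T}} :=
  [set [set v | equivAB e A B u v] | u : T].
Arguments induced {T} e S.

From mathcomp Require Import all_boot boolp.
Set Implicit Arguments. Unset Strict Implicit. Unset Printing Implicit Defensive.

(* Keep the guidance systems of G[A] and G[B], and add, for every vertex u and
   every class Z of the relation ≡_(A,B), one arc from u to a neighbour that is
   one step closer to Z.  Following these arcs from u reaches Z within dist(u, Z)
   steps.  A shortest u-v path either stays inside one side, where the guidance
   system of that side applies (distances in G[S] are at least those in G), or
   it crosses from one side to the other along an edge ab; the classes X of a and
   Y of b are then completely joined, and on a shortest path dist(u, X) and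
   dist(v, Y) are exactly the lengths of the two pieces before a and after b. *)

Section Walks.
Variable T : finType.
Implicit Types (e : rel T) (x y z : T).

Lemma walk_len0 e x y : walk_len e x y 0 <-> x = y.
Proof.
split; first by case=> [[|? ?] [//= _ _ <-]].
by move=> ->; exists [::].
Qed.

Lemma walk_lenS e x z n :
  walk_len e x z n.+1 <-> exists w, e x w /\ walk_len e w z n.
Proof.
split; first by case=> [[|w p] [//= [sp] /andP[xw pw] lz]]; exists w; split; last exists p.
case=> w [xw [p [sp pw lz]]]; exists (w :: p).
by split; rewrite /= ?sp ?xw.
Qed.

Lemma walk_len1 e x y : e x y -> walk_len e x y 1.
Proof. by move=> xy; apply/walk_lenS; exists y; split; last apply/walk_len0. Qed.

Lemma walk_len_cat e n m x y z :
  walk_len e x y n -> walk_len e y z m -> walk_len e x z (n + m).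
Proof.
elim: n x => [|n IHn] x; first by move/walk_len0 ->.
case/walk_lenS=> w [xw wy] yz; apply/walk_lenS; exists w; split=> //.
exact: IHn.
Qed.

Lemma walk_len_sym e n x y :
  symmetric e -> walk_len e x y n -> walk_len e y x n.
Proof.
move=> esym; elim: n x y => [|n IHn] x y; first by move/walk_len0 ->; apply/walk_len0.
case/walk_lenS=> w [xw wy]; rewrite -addn1.
by apply: walk_len_cat (IHn _ _ wy) (walk_len1 _); rewrite esym.
Qed.

End Walks.

Lemma walk_len_map (S T : finType) (eS : rel S) (e : rel T) (f : S -> T) n x y :
  (forall a b, eS a b -> e (f a) (f b)) ->
  walk_len eS x y n -> walk_len e (f x) (f y) n.
Proof.
move=> hom; elim: n x => [|n IHn] x; first by move/walk_len0 ->; apply/walk_len0.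
case/walk_lenS=> w [xw wy]; apply/walk_lenS; exists (f w).
by split; [exact: hom | exact: IHn].
Qed.

Lemma ball_map (S T : finType) (HS : rel S) (H : rel T) (f : S -> T) a x y :
  (forall a b, HS a b -> H (f a) (f b)) ->
  ball HS x a y -> ball H (f x) a (f y).
Proof. by move=> hom [n [na w]]; exists n; split; last exact: walk_len_map w. Qed.

Section LiftFromSubset.
Variables (T : finType) (S : {set T}) (HS : rel {x : T | x \in S}).

Definition lift_rel : rel T := fun u v =>
  match (insub u : option {x : T | x \in S}), (insub v : option {x : T | x \in S}) with
  | Some u', Some v' => HS u' v'
  | _, _ => false
  end.

Lemma lift_rel_val a b : lift_rel (val a) (val b) = HS a b.
Proof. by rewrite /lift_rel !valK. Qed.

Lemma lift_relP u v :
  lift_rel u v -> exists a b, [/\ val a = u, val b = v & HS a b].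
Proof.
rewrite /lift_rel; case: insubP => // a _ <-; case: insubP => // b _ <- ab.
by exists a, b.
Qed.

Lemma lift_rel_src u v : lift_rel u v -> u \in S.
Proof. by case/lift_relP=> a [b [<- _ _]]; exact: valP. Qed.

Lemma lift_rel_orientation (e : rel T) :
  partial_orientation (induced e S) HS -> partial_orientation e lift_rel.
Proof. by move=> oS u v /lift_relP[a [b [<- <- /oS]]]. Qed.

Lemma lift_rel_outdeg c : max_outdeg_le HS c -> max_outdeg_le lift_rel c.
Proof.
move=> dS u; case: (boolP (u \in S)) => uS; last first.
  suff -> : [set v | lift_rel u v] = set0 by rewrite cards0.
  by apply/setP => v; rewrite !inE; apply/negP => /lift_rel_src; apply/negP.
set a : {x : T | x \in S} := exist _ u uS.
apply: leq_trans (dS a); apply: leq_trans (leq_imset_card val _).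
apply/subset_leq_card/subsetP => v; rewrite inE => /lift_relP[a' [b [ua' <- ab]]].
by apply: imset_f; rewrite inE (_ : a = a') //; apply: val_inj.
Qed.

End LiftFromSubset.

Lemma max_outdeg_le_or (T : finType) (H1 H2 : rel T) c1 c2 :
  max_outdeg_le H1 c1 -> max_outdeg_le H2 c2 ->
  max_outdeg_le (fun u v => H1 u v || H2 u v) (c1 + c2).
Proof.
move=> d1 d2 u.
have -> : [set v | H1 u v || H2 u v] = [set v | H1 u v] :|: [set v | H2 u v].
  by apply/setP => v; rewrite !inE.
exact: leq_trans (leq_card_setU _ _) (leq_add (d1 u) (d2 u)).
Qed.

Section WalkInSubset.
Variables (T : finType) (e : rel T) (S : {set T}).

Lemma walk_len_induced_or_exit n x v (xS : x \in S) : walk_len e x v n ->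
  (exists2 v' : {x : T | x \in S}, val v' = v & walk_len (induced e S) (exist _ x xS) v' n)
  \/ exists j1 j2 a b, [/\ j1 + j2.+1 = n, walk_len e x a j1, e a b & walk_len e b v j2]
       /\ a \in S /\ b \notin S.
Proof.
elim: n x xS => [|n IHn] x xS.
  by move/walk_len0 => <-; left; exists (exist _ x xS) => //; apply/(walk_len0 (induced e S)).
case/walk_lenS=> w [xw wv]; case: (boolP (w \in S)) => wS; last first.
  by right; exists 0, n, x, w; split; first by split=> //; apply/walk_len0.
case: (IHn w wS wv) => [[v' <- wv']|[j1 [j2 [a [b [[jn wa ab bv] abS]]]]]].
  by left; exists v' => //; apply/(walk_lenS (induced e S)); exists (exist _ w wS).
right; exists j1.+1, j2, a, b; split=> //; split=> //; first by rewrite addSn jn.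
by apply/walk_lenS; exists w.
Qed.

Lemma dist_eq_induced (u v : {x : T | x \in S}) l :
  walk_len (induced e S) u v l -> dist_eq e (val u) (val v) l ->
  dist_eq (induced e S) u v l.
Proof.
move=> uv [_ lmin]; split=> // m ml /(walk_len_map (e := e) (f := val)) wm.
exact: lmin ml (wm (fun a b ab => ab)).
Qed.

End WalkInSubset.

Section TowardSets.
Variables (T : finType) (e : rel T).
Implicit Types (X Y Z : {set T}) (F : {set {set T}}) (H : rel T).

Definition reaches Z x d : Prop := exists2 z, z \in Z & walk_len e x z d.

Definition dist_to_eq Z x d : Prop :=
  reaches Z x d /\ forall m, m < d -> ~ reaches Z x m.

Lemma dist_to_eq_uniq Z x d1 d2 :
  dist_to_eq Z x d1 -> dist_to_eq Z x d2 -> d1 = d2.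
Proof.
move=> [r1 min1] [r2 min2].
by case: (ltngtP d1 d2) => // lt; [case: (min2 _ lt r1) | case: (min1 _ lt r2)].
Qed.

Lemma dist_to_eqS Z x d :
  dist_to_eq Z x d.+1 -> exists w, e x w /\ dist_to_eq Z w d.
Proof.
case=> [[z zZ /walk_lenS[w [xw wz]]] xmin]; exists w; split=> //.
split=> [|m md [y yZ wy]]; first by exists z.
by apply: (xmin m.+1 md); exists y => //; apply/walk_lenS; exists w.
Qed.

Definition closer Z x w : Prop :=
  e x w /\ exists d, dist_to_eq Z w d /\ dist_to_eq Z x d.+1.

(* The default [x] never becomes an arc: [toward_rel] also demands [closer]. *)
Definition step_toward Z x : T := odflt x [pick w | `[< closer Z x w >]].

Lemma step_toward_spec Z x d : dist_to_eq Z x d.+1 ->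
  closer Z x (step_toward Z x) /\ dist_to_eq Z (step_toward Z x) d.
Proof.
move=> xd; have [w [xw wd]] := dist_to_eqS xd.
have : closer Z x (step_toward Z x).
  rewrite /step_toward; case: pickP => [w' /asboolP // | none].
  have /asboolP : closer Z x w by split=> //; exists d.
  by rewrite none.
case=> xs [d' [sd' xd']]; split; first by split=> //; exists d'.
by rewrite -(succn_inj (dist_to_eq_uniq xd' xd)).
Qed.

Definition toward_rel F : rel T := fun u v =>
  [exists Z in F, `[< closer Z u v >] && (v == step_toward Z u)].

Lemma toward_rel_orientation F : partial_orientation e (toward_rel F).
Proof. by move=> u v /exists_inP[Z _ /andP[/asboolP[]]]. Qed.

Lemma toward_rel_outdeg F : max_outdeg_le (toward_rel F) #|F|.
Proof.
move=> u; apply: leq_trans (leq_imset_card (step_toward^~ u) F).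
apply/subset_leq_card/subsetP => v; rewrite inE.
by case/exists_inP=> Z ZF /andP[_ /eqP->]; apply: imset_f.
Qed.

Definition guides H Z : Prop :=
  forall x d, dist_to_eq Z x d -> exists2 z, z \in Z & ball H x d z.

Lemma guides_sub H1 H2 Z : subrel H1 H2 -> guides H1 Z -> guides H2 Z.
Proof. by move=> sub g x d /g[z zZ xz]; exists z => //; apply: (ball_map (f := id)) xz. Qed.

Lemma toward_rel_guides F Z : Z \in F -> guides (toward_rel F) Z.
Proof.
move=> ZF x d; elim: d x => [|d IHd] x.
  by case=> [[z zZ /walk_len0 ->] _]; exists z => //; exists 0; split=> //; apply/walk_len0.
case/step_toward_spec=> xs /IHd[z zZ [n [nd sz]]]; exists z => //; exists n.+1.
split=> //; apply/walk_lenS; exists (step_toward Z x); split=> //.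
by apply/exists_inP; exists Z; rewrite // eqxx andbT; apply/asboolP.
Qed.

Lemma dist_to_eq_geodesic X Y u v j1 j2 : symmetric e ->
  (forall x y, x \in X -> y \in Y -> e x y) ->
  (forall m, m < j1 + j2.+1 -> ~ walk_len e u v m) ->
  reaches X u j1 -> reaches Y v j2 -> dist_to_eq X u j1.
Proof.
move=> esym join uvmin uX [y yY vy]; split=> // m mj [x xX ux].
apply: (uvmin (m + (1 + j2))); first by rewrite add1n ltn_add2r.
exact: walk_len_cat ux (walk_len_cat (walk_len1 (join x y xX yY)) (walk_len_sym esym vy)).
Qed.

Lemma guided_across X Y H u v j1 j2 : symmetric e ->
  (forall x y, x \in X -> y \in Y -> e x y) -> guides H X -> guides H Y ->
  dist_eq e u v (j1 + j2.+1) -> reaches X u j1 -> reaches Y v j2 ->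
  edge_between e (ball H u j1) (ball H v j2).
Proof.
move=> esym join gX gY [_ uvmin] uX vY.
have joinC y x : y \in Y -> x \in X -> e y x by move=> yY xX; rewrite esym join.
have vumin m : m < j2 + j1.+1 -> ~ walk_len e v u m.
  by rewrite addnS addnC -addnS => /uvmin vu /(walk_len_sym esym).
have [z1 z1X uz1] := gX _ _ (dist_to_eq_geodesic esym join uvmin uX vY).
have [z2 z2Y vz2] := gY _ _ (dist_to_eq_geodesic esym joinC vumin vY uX).
by exists z1, z2; split=> //; apply: join.
Qed.

End TowardSets.

Lemma guided_within_side (T : finType) (e H : rel T) (S : {set T})
    (HS : rel {x : T | x \in S}) n (u v : {x : T | x \in S}) l :
  weak_guidance (induced e S) HS n -> (forall a b, HS a b -> H (val a) (val b)) ->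
  val u != val v -> dist_eq e (val u) (val v) l -> l <= n ->
  walk_len (induced e S) u v l ->
  exists a b, a + b = l.-1 /\ edge_between e (ball H (val u) a) (ball H (val v) b).
Proof.
move=> [_ gS] sub uv uvl ln wl.
have uv' : u != v by apply: contra_neq uv => ->.
have [a [b [ab [x [y [ux vy xy]]]]]] := gS u v l uv' (dist_eq_induced wl uvl) ln.
by exists a, b; split=> //; exists (val x), (val y); split=> //; apply: ball_map sub _.
Qed.

Section Partition.
Variables (T : finType) (e : rel T) (A B : {set T}).
Variables (HA : rel {x : T | x \in A}) (HB : rel {x : T | x \in B}).
Hypotheses (AB_disjoint : A :&: B = set0) (AB_cover : A :|: B = setT).

Lemma in_partition_r x : (x \in B) = (x \notin A).
Proof.
have /setP/(_ x) := AB_disjoint; have /setP/(_ x) := AB_cover.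
by rewrite !inE; case: (x \in A); case: (x \in B).
Qed.

Lemma equivAB_refl x : equivAB e A B x x.
Proof.
rewrite /equivAB in_partition_r.
by case: (x \in A) => /=; rewrite ?orbF; apply/forall_inP.
Qed.

Lemma equivAB_side a x : equivAB e A B a x ->
  (x \in A) = (a \in A) /\ forall w, (w \in A) != (a \in A) -> e a w = e x w.
Proof.
rewrite /equivAB !in_partition_r.
case/orP=> /and3P[].
  move=> -> -> /forall_inP same; split=> // w wA; apply/eqP/same.
  by rewrite in_partition_r; case: (w \in A) wA.
move=> /negbTE-> /negbTE-> /forall_inP same; split=> // w wA; apply/eqP/same.
by case: (w \in A) wA.
Qed.

Lemma equivAB_join a b x y : symmetric e ->
  (a \in A) != (b \in A) -> e a b ->
  equivAB e A B a x -> equivAB e A B b y -> e x y.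
Proof.
move=> esym ab_sides ab /equivAB_side[_ ax] /equivAB_side[yb by_].
rewrite -ax; last by rewrite yb eq_sym.
by rewrite esym -by_ // esym.
Qed.

Definition combined_orientation : rel T := fun u v =>
  (lift_rel HA u v || lift_rel HB u v) || toward_rel e (equivAB_classes e A B) u v.

Lemma lift_rel_sides_outdeg c : max_outdeg_le HA c -> max_outdeg_le HB c ->
  max_outdeg_le (fun u v => lift_rel HA u v || lift_rel HB u v) c.
Proof.
move=> dA dB u; case: (boolP (u \in A)) => uA.
  have -> : [set v | lift_rel HA u v || lift_rel HB u v] = [set v | lift_rel HA u v].
    apply/setP => v; rewrite !inE; case: (lift_rel HB u v) / idP; rewrite ?orbF //.
    by move/lift_rel_src; rewrite in_partition_r uA.
  exact: lift_rel_outdeg.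
have -> : [set v | lift_rel HA u v || lift_rel HB u v] = [set v | lift_rel HB u v].
  apply/setP => v; rewrite !inE; case: (lift_rel HA u v) / idP => //.
  by move/lift_rel_src; rewrite (negbTE uA).
exact: lift_rel_outdeg.
Qed.

Lemma combined_outdeg c : max_outdeg_le HA c -> max_outdeg_le HB c ->
  max_outdeg_le combined_orientation (c + #|equivAB_classes e A B|).
Proof.
move=> dA dB.
exact: max_outdeg_le_or (lift_rel_sides_outdeg dA dB) (toward_rel_outdeg _ _).
Qed.

Lemma combined_lift_val_l a b : HA a b -> combined_orientation (val a) (val b).
Proof. by rewrite /combined_orientation lift_rel_val => ->. Qed.

Lemma combined_lift_val_r a b : HB a b -> combined_orientation (val a) (val b).
Proof. by rewrite /combined_orientation lift_rel_val => ->; rewrite orbT. Qed.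

Lemma combined_guides_class Z :
  Z \in equivAB_classes e A B -> guides e combined_orientation Z.
Proof.
move=> Zclass; apply: guides_sub (toward_rel_guides Zclass) => x y xy.
by rewrite /combined_orientation xy orbT.
Qed.

Lemma combined_weak_guidance n : simple_graph e ->
  weak_guidance (induced e A) HA n -> weak_guidance (induced e B) HB n ->
  weak_guidance e combined_orientation n.
Proof.
move=> [esym _] gA gB; split.
  move=> u v /orP[/orP[]|]; last exact: toward_rel_orientation u v.
    exact: lift_rel_orientation (proj1 gA) u v.
  exact: lift_rel_orientation (proj1 gB) u v.
move=> u v l uv uvl ln; have [uv_walk _] := uvl.
have [S [HS [gS HS_sub uS S_exit]]] : exists (S : {set T}) (HS : rel {x : T | x \in S}),
    [/\ weak_guidance (induced e S) HS n,
        forall a b, HS a b -> combined_orientation (val a) (val b),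
        u \in S & forall a b, a \in S -> b \notin S -> (a \in A) != (b \in A)].
  case: (boolP (u \in A)) => uA.
    by exists A, HA; split=> // [|a b -> //]; apply: combined_lift_val_l.
  exists B, HB; split=> // [||a b]; first exact: combined_lift_val_r.
    by rewrite in_partition_r.
  by rewrite !in_partition_r => /negbTE-> /negbNE->.
case: (walk_len_induced_or_exit uS uv_walk) => [[v' vv' wv'] |].
  by subst v; apply: (guided_within_side (u := exist _ u uS)) gS HS_sub uv uvl ln wv'.
case=> [j1 [j2 [a [b [[jl ua ab bv] [aS bS]]]]]].
exists j1, j2; split; first by rewrite -jl addnS.
rewrite -jl in uvl.
apply: (guided_across (X := [set w | equivAB e A B a w]) (Y := [set w | equivAB e A B b w])).
- exact: esym.
- by move=> x y; rewrite !inE; apply: equivAB_join (S_exit _ _ aS bS) ab.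
- by apply: combined_guides_class; apply/imsetP; exists a.
- by apply: combined_guides_class; apply/imsetP; exists b.
- exact: uvl.
- by exists a; rewrite // inE equivAB_refl.
- by exists b; [rewrite inE equivAB_refl | apply: walk_len_sym esym bv].
Qed.

End Partition.

Theorem lemma33 (T : finType) (e : rel T) (r : option nat) (A B : {set T})
    (k c : nat) :
  simple_graph e -> pos_or_inf r ->
  A :&: B = set0 -> A :|: B = setT ->
  #|equivAB_classes e A B| = k ->
  (exists HA : rel {x : T | x \in A},
      weak_guidance_gen (induced e A) HA r /\ max_outdeg_le HA c) ->
  (exists HB : rel {x : T | x \in B},
      weak_guidance_gen (induced e B) HB r /\ max_outdeg_le HB c) ->
  exists H : rel T, weak_guidance_gen e H r /\ max_outdeg_le H (c + k).
Proof.
move=> eG _ AB_disjoint AB_cover <- [HA [gA dA]] [HB [gB dB]].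
exists (combined_orientation e HA HB); split; last first.
  exact (combined_outdeg e AB_disjoint AB_cover dA dB).
case: r gA gB => [n|] /= gA gB.
  exact (combined_weak_guidance AB_disjoint AB_cover eG gA gB).
move=> n n_gt0.
exact (combined_weak_guidance AB_disjoint AB_cover eG (gA n n_gt0) (gB n n_gt0)).
Qed.
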